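(* Finite memory winning strategies are not sufficient in interval mean-payoff games: there exists an interval mean-payoff game $(G,I)$ in which Eve has a winning strategy but has no winning strategy with finite memory.
   Context: A game graph is a tuple $G=(V,V_\exists,E,w,q_0)$ where $(V,E)$ is a finite directed graph in which every vertex has an outgoing edge, $w:E\to\mathbb{Z}$ is an integer edge-weight function, $V_\exists\subseteq V$ are Eve's vertices (the rest are Adam's), and $q_0\in V$ is the initial vertex. A play is an infinite path $\pi=v_0v_1\cdots$ with $v_0=q_0$; write $w(\pi[..k])=\sum_{i=0}^{k-1}w(v_i,v_{i+1})$. A strategy for a player maps finite play prefixes ending in one of that player's vertices to a successor vertex; it has finite memory if it can be realized as the output of a finite-state machine (with finitely many memory states) reading the play. The (liminf) mean-payoff of a play is $\underline{MP}(\pi)=\liminf_{k\to\infty}\frac1k w(\pi[..k])$. An interval mean-payoff game is a pair $(G,I)$ with $I$ a finite union of real intervals; a play is winning for Eve iff $\underline{MP}(\pi)\in I$, and winning for Adam otherwise. A strategy is winning for a player if all plays consistent with it are winning for that player. *)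

From HB Require Import structures.
From mathcomp Require Import all_boot all_order all_algebra.
From mathcomp Require Import all_classical all_reals all_analysis.
Import Order.TTheory GRing.Theory Num.Theory.
Local Open Scope ring_scope.

(* A game graph (V, V_Eve, E, w, q0): V finite, every vertex has an outgoing
   edge, integer weights (only their values on edges matter). *)
Record game := Game {
  gV : finType;
  gE : rel gV;
  gEve : pred gV;          (* Eve's vertices; the others are Adam's *)
  gw : gV -> gV -> int;
  gq0 : gV;
  g_total : forall v, exists v', gE v v'
}.

Set Implicit Arguments. Unset Strict Implicit. Unset Printing Implicit Defensive.

Section Games.
Variable G : game.
Local Notation V := (gV G).

Definition is_play (p : nat -> V) : Prop :=
  p 0%N = gq0 G /\ forall i, gE G (p i) (p i.+1).

Definition pref (p : nat -> V) (k : nat) : seq V := mkseq p k.+1.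

Definition is_prefix (s : seq V) : Prop :=
  exists p k, is_play p /\ s = pref p k.

Definition strategy := seq V -> V.

Definition valid_strategy (sigma : strategy) : Prop :=
  forall s, is_prefix s -> gEve G (last (gq0 G) s) ->
    gE G (last (gq0 G) s) (sigma s).

Definition consistent (sigma : strategy) (p : nat -> V) : Prop :=
  forall k, gEve G (p k) -> p k.+1 = sigma (pref p k).

Definition finite_memory (sigma : strategy) : Prop :=
  exists (M : finType) (m0 : M) (upd : M -> V -> M) (out : M -> V),
    forall s, is_prefix s -> gEve G (last (gq0 G) s) ->
      sigma s = out (foldl upd m0 s).

Definition wprefix (p : nat -> V) (k : nat) : int :=
  \sum_(i < k) gw G (p i) (p i.+1).

Definition MP (R : realType) (p : nat -> V) : \bar R :=
  limn_einf (fun k : nat => (((wprefix p k)%:~R / k%:R : R))%:E).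

Definition in_union (R : realType) (I : seq (interval R)) (x : R) : bool :=
  has (fun i => x \in i) I.

Definition eve_wins_play (R : realType) (I : seq (interval R)) (p : nat -> V) : Prop :=
  exists x : R, MP R p = x%:E /\ in_union I x.

Definition winning_strategy (R : realType) (I : seq (interval R)) (sigma : strategy) : Prop :=
  valid_strategy sigma /\
  forall p, is_play p -> consistent sigma p -> eve_wins_play I p.

End Games.

From mathcomp Require Import all_boot all_order all_algebra.
From mathcomp Require Import all_classical all_reals all_analysis.
From mathcomp Require Import ring lra zify.
Set Implicit Arguments.
Unset Strict Implicit.
Unset Printing Implicit Defensive.
Import Order.TTheory GRing.Theory Num.Theory.
Import numFieldNormedType.Exports.
Local Open Scope classical_set_scope.
Local Open Scope ring_scope.

(* In [weight_choice_game] Eve forever chooses between entering a vertex of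
   weight 2 and one of weight 0. She achieves the irrational mean payoff
   sqrt 2 by entering the weight-2 vertex exactly when the current total is at
   most sqrt 2 times the current length, which keeps the total within 2 of
   sqrt 2 * k. A finite-memory strategy in a game where Eve owns every vertex
   produces an eventually periodic play, whose mean payoff is the average
   weight of its period, a rational number. *)

Lemma double_sqr_neq_sqr (m n : nat) : (0 < n)%N -> (2 * n ^ 2 != m ^ 2)%N.
Proof.
move=> n0; apply/eqP=> e.
have m0 : (0 < m)%N by case: (posnP m) e => // ->; nia.
have := congr1 (logn 2) e.
rewrite lognM ?expn_gt0 ?n0 // !lognX logn_prime //; lia.
Qed.

Lemma sqrt2_neq_ratio (R : rcfType) (c : int) (d : nat) : (0 < d)%N ->
  Num.sqrt (2 : R) != c%:~R / d%:R.
Proof.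
move=> d0; apply/eqP=> e.
have d0R : d%:R != 0 :> R by rewrite pnatr_eq0 -lt0n.
have ec : c%:~R = Num.sqrt 2 * d%:R :> R by rewrite e divfK.
have : (2 * d ^ 2)%N%:R = (`|c| ^ 2)%N%:R :> R.
  by rewrite natrM !natrX natr_absz intr_norm real_normK ?realz // ec exprMn sqr_sqrtr.
by move/eqP; rewrite eqr_nat; apply/negP/double_sqr_neq_sqr.
Qed.

Lemma cvg_avg_bounded_deviation (R : realType) (S : nat -> R) (y B : R) :
  (forall k, `|S k - y * k%:R| <= B) -> (fun k => S k / k%:R) @ \oo --> y.
Proof.
move=> hB; apply/cvgrPdist_le => eps eps0.
have B0 : 0 <= B by apply: le_trans (hB 0%N); exact: normr_ge0.
exists (Num.truncn (B / eps)).+1 => // k /= hk.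
have k0 : (0 : R) < k%:R by rewrite ltr0n (leq_trans _ hk).
have -> : y - S k / k%:R = - (S k - y * k%:R) / k%:R by field; rewrite lt0r_neq0.
rewrite normrM normrN normfV (gtr0_norm k0) ler_pdivrMr // (le_trans (hB k)) //.
by rewrite -ler_pdivrMl // mulrC ltW // (lt_le_trans (truncnS_gt _)) // ler_nat.
Qed.

Lemma bounded_eventually_periodic (f : nat -> int) i d : (0 < d)%N ->
  (forall k, (i <= k)%N -> f (k + d)%N = f k) ->
  exists B : nat, forall k, (`|f k| <= B)%N.
Proof.
move=> d0 f_per; exists (\max_(l < i + d) `|f l|)%N.
elim/ltn_ind=> k IH; have [lt_k_id | le_id_k] := ltnP k (i + d).
  exact: (leq_bigmax (Ordinal lt_k_id)).
have le_dk : (d <= k)%N by apply: leq_trans le_id_k; rewrite leq_addl.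
rewrite -(subnK le_dk) f_per; first by apply: IH; rewrite ltn_subrL d0; lia.
by rewrite leq_subRL // addnC.
Qed.

Section MeanPayoff.
Variables (R : realType) (G : game).
Implicit Types (p : nat -> gV G).

Lemma wprefixS p k : wprefix p k.+1 = wprefix p k + gw G (p k) (p k.+1).
Proof. by rewrite /wprefix big_ord_recr. Qed.

Lemma MP_bounded_deviation p (y B : R) :
  (forall k, `|(wprefix p k)%:~R - y * k%:R| <= B) -> MP R p = y%:E.
Proof.
move=> /cvg_avg_bounded_deviation avg_y.
have avg_yE : (fun k => (((wprefix p k)%:~R / k%:R : R))%:E) @ \oo --> y%:E.
  by apply: cvg_EFin; [exact: nearW | exact: avg_y].
by rewrite /MP; have [-> _] := cvg_limn_einf_sup avg_yE.
Qed.

Lemma wprefix_eventually_periodic p i d :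
  (forall k, (i <= k)%N -> p (k + d)%N = p k) ->
  exists C : int, forall k, (i <= k)%N -> wprefix p (k + d) = wprefix p k + C.
Proof.
move=> p_per; exists (wprefix p (i + d) - wprefix p i) => k /subnK <-.
elim: (k - i)%N => [|t IH]; first by rewrite add0n addrC subrK.
have t_per : p (t + i + d).+1 = p (t + i).+1 by rewrite -addSn p_per // leqW ?leq_addl.
by rewrite !addSn !wprefixS IH t_per p_per ?leq_addl //; ring.
Qed.

Lemma MP_eventually_periodic p i d : (0 < d)%N ->
  (forall k, (i <= k)%N -> p (k + d)%N = p k) ->
  exists C : int, MP R p = (C%:~R / d%:R)%:E.
Proof.
move=> d0 p_per; have [C wprefix_shift] := wprefix_eventually_periodic p_per.
pose D k := d%:Z * wprefix p k - C * k%:Z.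
have D_per k : (i <= k)%N -> D (k + d)%N = D k.
  by move=> le_ik; rewrite /D wprefix_shift // PoszD; ring.
have [B D_bound] := bounded_eventually_periodic d0 D_per.
exists C; apply: (@MP_bounded_deviation _ _ (B%:R / d%:R)) => k.
have d0R : (0 : R) < d%:R by rewrite ltr0n.
have -> : (wprefix p k)%:~R - C%:~R / d%:R * k%:R = (D k)%:~R / d%:R :> R.
  by rewrite /D intrD intrN !intrM -!pmulrn; field; rewrite lt0r_neq0.
rewrite normrM [`|_^-1|]gtr0_norm ?invr_gt0 // ler_pM2r ?invr_gt0 //.
by rewrite -intr_norm -abszE ler_nat.
Qed.

End MeanPayoff.

Lemma iter_eventually_periodic (T : finType) (f : T -> T) (x : T) :
  exists i d, (0 < d)%N /\ forall k, (i <= k)%N -> iter (k + d) f x = iter k f x.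
Proof.
pose it (o : 'I_#|T|.+1) := iter o f x.
have /injectivePn [a [b neq_ab eq_ab]] : ~~ injectiveb it.
  by apply/injectiveP => /leq_card; rewrite card_ord ltnn.
wlog lt_ab : a b neq_ab eq_ab / (a < b)%N.
  move=> hwlog; have [lt_ab | lt_ba | /val_inj eq_ab'] := ltngtP a b.
  - exact: hwlog lt_ab.
  - by apply: (hwlog b a); rewrite 1?eq_sym.
  - by rewrite eq_ab' eqxx in neq_ab.
exists a, (b - a)%N; split => [|k le_ak]; first by rewrite subn_gt0.
by rewrite -(subnK le_ak) -addnA subnKC 1?ltnW // !iterD -[iter b f x]eq_ab.
Qed.

Section OnePlayerPlays.
Variable G : game.
Local Notation V := (gV G).
Implicit Types (p : nat -> V).

Lemma last_pref p k (x : V) : last x (pref p k) = p k.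
Proof. by rewrite /pref mkseqS last_rcons. Qed.

Lemma prefS p k : pref p k.+1 = rcons (pref p k) (p k.+1).
Proof. by rewrite /pref mkseqS. Qed.

Definition some_succ (v : V) : V := xchoose (@g_total G v).

Lemma edge_some_succ v : gE G v (some_succ v).
Proof. exact: xchooseP. Qed.

Lemma is_prefix_pref_path p k : p 0%N = gq0 G ->
  (forall n, (n < k)%N -> gE G (p n) (p n.+1)) -> is_prefix (pref p k).
Proof.
move=> p0 p_path.
pose q n := if (n <= k)%N then p n else iter (n - k) some_succ (p k).
exists q, k; split; last first.
  by apply/eq_in_map => n; rewrite mem_iota add0n ltnS /q => /= ->.
split=> [|n]; first by rewrite /q leq0n.
rewrite /q /=; have [lt_nk | lt_kn | ->] := ltngtP n k.
- exact: p_path.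
- by rewrite subSn 1?ltnW // edge_some_succ.
- by rewrite subSnn edge_some_succ.
Qed.

Lemma finite_memory_eventually_periodic_play (sigma : strategy G) :
  (forall v, gEve G v) -> valid_strategy sigma -> finite_memory sigma ->
  exists p, [/\ is_play p, consistent sigma p &
    exists i d, (0 < d)%N /\ forall k, (i <= k)%N -> p (k + d)%N = p k].
Proof.
move=> all_eve sigma_valid [M [m0 [upd [out sigmaE]]]].
pose step m := upd m (out m).
pose state k := iter k step (upd m0 (gq0 G)).
pose p k := if k is k'.+1 then out (state k') else gq0 G.
have stateE k : foldl upd m0 (pref p k) = state k.
  by elim: k => [|k IH] //; rewrite prefS foldl_rcons IH.
have p_path k : (forall n, (n < k)%N -> gE G (p n) (p n.+1)) ->
    is_prefix (pref p k) /\ p k.+1 = sigma (pref p k).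
  move=> path_k; have pref_k := is_prefix_pref_path erefl path_k.
  by rewrite sigmaE ?last_pref ?stateE.
have p_edge k : gE G (p k) (p k.+1).
  elim/ltn_ind: k => k IH; have [pref_k ->] := p_path k IH.
  by rewrite -[p k](last_pref p k (gq0 G)) sigma_valid ?last_pref.
have [i [d [d0 state_per]]] := iter_eventually_periodic step (upd m0 (gq0 G)).
exists p; split; first by split.
- by move=> k _; have [_ ->] := p_path k (fun n _ => p_edge n).
- exists i.+1, d; split=> // -[|k] //= lt_ik.
  by rewrite /state state_per.
Qed.

End OnePlayerPlays.

Definition entry_weight (v : bool) : int := if v then 2 else 0.

Definition weight_choice_game : game :=
  @Game bool (fun _ _ => true) predT (fun _ v => entry_weight v) false
    (fun v => ex_intro _ v isT).

Lemma sum_entry_weight_pref (p : nat -> bool) k :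
  \sum_(v <- behead (@pref weight_choice_game p k)) entry_weight v =
  @wprefix weight_choice_game p k.
Proof.
elim: k => [|k IH]; first by rewrite /wprefix big_ord0 big_nil.
by rewrite prefS wprefixS -IH -cats1 /pref /mkseq /= big_cat big_seq1.
Qed.

Definition tracking_strategy (R : realType) (y : R) : strategy weight_choice_game :=
  fun s => (\sum_(v <- behead s) entry_weight v)%:~R <= y * (size s).-1%:R.

Lemma tracking_deviation (R : realType) (y : R) (p : nat -> bool) :
  0 <= y <= 2 -> consistent (tracking_strategy y) p ->
  forall k, `|(@wprefix weight_choice_game p k)%:~R - y * k%:R| <= 2.
Proof.
move=> /andP [y_ge0 y_le2] p_track; elim=> [|k IH].
  by rewrite /wprefix big_ord0 mulr0 subr0 normr0.
rewrite wprefixS /= p_track // /tracking_strategy sum_entry_weight_pref size_mkseq /=.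
move: IH; rewrite -[k.+1]addn1 natrD mulrDr mulr1 intrD.
set S : R := (wprefix _ _)%:~R.
rewrite /entry_weight; case: ifP; rewrite !ler_norml => track_k /andP [? ?].
  by apply/andP; split; lra.
by apply/andP; split; lra.
Qed.

Theorem mainTheorem3 (R : realType) :
  exists (G : game) (I : seq (interval R)),
    (exists sigma : strategy G, winning_strategy I sigma) /\
    ~ (exists sigma : strategy G, finite_memory sigma /\ winning_strategy I sigma).
Proof.
pose x : R := Num.sqrt 2.
have x_range : 0 <= x <= 2.
  have x_ge0 : 0 <= x := sqrtr_ge0 2.
  have x_sq : x ^+ 2 = 2 by rewrite sqr_sqrtr.
  by rewrite x_ge0 /=; nra.
have in_x y : in_union [:: `[x, x]] y = (y == x).
  by rewrite /in_union /= orbF in_itv /= eq_le andbC.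
exists weight_choice_game, [:: `[x, x]]; split.
  exists (tracking_strategy x); split=> // p _ p_track; exists x.
  by rewrite in_x eqxx (MP_bounded_deviation (tracking_deviation x_range p_track)).
case=> sigma [sigma_fm [sigma_valid sigma_win]].
have [p [p_play p_cons [i [d [d0 p_per]]]]] :=
  finite_memory_eventually_periodic_play (G := weight_choice_game) (fun _ => isT)
    sigma_valid sigma_fm.
have [y [mp_y /[!in_x] /eqP y_x]] := sigma_win p p_play p_cons.
have [C mp_C] := MP_eventually_periodic R d0 p_per.
move: mp_C; rewrite mp_y y_x => -[x_C].
by move: (sqrt2_neq_ratio R C d0); rewrite -x_C eqxx.
Qed.
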